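(* Let $\omega=(\omega_1,\omega_2)\in\mathbb{R}^2$ be a frequency vector such that $\alpha:=\omega_1/\omega_2$ is irrational with (finite) Roth--Liouville irrationality measure $\mu(\alpha)$. Then $H^s_\omega\hookrightarrow Y^\sigma_\omega$ (continuous embedding) whenever $0\le\sigma<s-\mu(\alpha)+1$.
   Context: The Roth--Liouville irrationality measure $\mu(\alpha)$ is the supremum of all $\nu\ge1$ for which there exist infinitely many coprime pairs $(p,q)$, $q>0$, with $|\alpha-p/q|<q^{-\nu}$. On $\mathbb{T}^2=\mathbb{R}^2/\mathbb{Z}^2$ with Fourier coefficients $\hat u(n)$: $\langle\nabla\rangle^\sigma$ has symbol $\langle n\rangle^\sigma$, $\langle\partial_x\rangle$ has symbol $\langle\omega\cdot n\rangle$, $\partial_x^{-1}$ has symbol $\frac{1}{2\pi i\,\omega\cdot n}1_{n\ne0}$, where $\langle a\rangle=(1+|a|^2)^{1/2}$. $H^s_\omega$ is the usual Sobolev space $H^s(\mathbb{T}^2)$ (identified with quasi-periodic functions $x\mapsto g(x\omega)$), and $Y^\sigma_\omega$ is the closure of $C^\infty(\mathbb{T}^2)$ under $\|\langle\nabla\rangle^\sigma\langle\partial_x\rangle u\|_{L^2}+\|\langle\nabla\rangle^\sigma\partial_x^{-1}u\|_{L^2}$. *)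

From HB Require Import structures.
From mathcomp Require Import all_boot all_order all_algebra.
From mathcomp Require Import all_classical all_reals all_analysis.
From mathcomp Require Import complex.
Set Implicit Arguments. Unset Strict Implicit. Unset Printing Implicit Defensive.
Import Order.TTheory GRing.Theory Num.Theory.
Local Open Scope classical_set_scope.
Local Open Scope ring_scope.

Section Defs.
Variable R : realType.

Definition jbr (a : R) : R := Num.sqrt (1 + a ^+ 2).

Definition jbrZ2 (n : int * int) : R :=
  Num.sqrt (1 + (n.1%:~R) ^+ 2 + (n.2%:~R) ^+ 2).

Definition dotw (w1 w2 : R) (n : int * int) : R := w1 * n.1%:~R + w2 * n.2%:~R.

Definition good_exponent (a nu : R) : Prop :=
  1 <= nu /\
  ~ finite_set [set pq : int * int |
      [/\ coprimez pq.1 pq.2, (0 < pq.2)%R &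
          `|a - pq.1%:~R / pq.2%:~R| < (pq.2%:~R : R) `^ (- nu)]].

Definition irr_measure (a : R) : \bar R :=
  ereal_sup [set nu%:E | nu in good_exponent a].

(* A function on T^2 is represented by its Fourier coefficients
   c : Z^2 -> C (complex numbers R[i]); |c n| is Normc.normc (c n). *)

Definition Hs_norm (s : R) (c : int * int -> R[i]) : \bar R :=
  sqrte (\esum_(n in [set: int * int])
           ((jbrZ2 n `^ s * Normc.normc (c n)) ^+ 2)%:E).

(* ||u||_{Y^sigma} = ||<nabla>^sigma <d_x> u||_{L^2} + ||<nabla>^sigma d_x^{-1} u||_{L^2},
   with symbols <n>^sigma <omega.n> and <n>^sigma (2 pi i omega.n)^{-1} 1_{n<>0}. *)
Definition Y_norm (w1 w2 sigma : R) (c : int * int -> R[i]) : \bar R :=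
  sqrte (\esum_(n in [set: int * int])
           ((jbrZ2 n `^ sigma * jbr (dotw w1 w2 n) * Normc.normc (c n)) ^+ 2)%:E)
  + sqrte (\esum_(n in [set: int * int])
           ((if n == (0, 0) then 0
             else jbrZ2 n `^ sigma / (2 * pi * `|dotw w1 w2 n|) * Normc.normc (c n))
              ^+ 2)%:E).

Definition embeds (w1 w2 s sigma : R) : Prop :=
  exists C : R, 0 < C /\
    forall c : int * int -> R[i], (Y_norm w1 w2 sigma c <= C%:E * Hs_norm s c)%E.

End Defs.

From HB Require Import structures.
From mathcomp Require Import all_boot all_order all_algebra.
From mathcomp Require Import all_classical all_reals all_analysis.
From mathcomp Require Import finmap complex ring lra zify.
Import Order.TTheory GRing.Theory Num.Theory.
Local Open Scope classical_set_scope.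
Local Open Scope ring_scope.
Set Implicit Arguments. Unset Strict Implicit.

(* The Y^sigma norm is the sum of two weighted l^2 norms, so it suffices to bound
   both Fourier multipliers by a constant times <n>^s.  The first one,
   <n>^sigma <omega.n>, is at most (1 + |w1| + |w2|) <n>^(sigma + 1), and
   sigma + 1 <= s because mu >= 2 by Dirichlet's approximation theorem.  For the
   second one pick nu with mu < nu and sigma + nu - 1 <= s: by definition of mu
   only finitely many reduced fractions p/q satisfy |alpha - p/q| < q^-nu, and
   as alpha is irrational their errors |alpha q - p| are bounded below; writing
   -n2/n1 in lowest terms then gives |alpha n1 + n2| >= c <n>^(1 - nu) for all
   n <> 0, i.e. 1/|omega.n| <= C <n>^(nu - 1). *)

Lemma finite_set_lb_gt0 (R : realDomainType) (T : choiceType) (E : set T) (f : T -> R) :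
  finite_set E -> (forall x, E x -> 0 < f x) ->
  exists2 d : R, 0 < d & forall x, E x -> d <= f x.
Proof.
move=> finE fpos; exists (\big[Num.min/1]_(x <- fset_set E) f x).
  rewrite big_seq; elim/big_ind: _ => // [d1 d2|x]; first by rewrite lt_min => -> ->.
  by rewrite in_fset_set // => /set_mem /fpos.
by move=> x Ex; apply: ge_bigmin_seq => //; rewrite in_fset_set //; apply/mem_set.
Qed.

Section Dirichlet.
Variable R : realType.
Implicit Types (a x y : R) (m : nat).

Definition fracr x : R := x - (Num.floor x)%:~R.

Lemma fracr_ge0 x : 0 <= fracr x.
Proof. by rewrite subr_ge0 floor_le. Qed.

Lemma fracr_lt1 x : fracr x < 1.
Proof. by rewrite ltrBlDr addrC -[1]/(1%:~R) -intrD floorD1_gt. Qed.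

Lemma truncn_eq_dist_lt1 x y : 0 <= x -> 0 <= y ->
  Num.truncn x = Num.truncn y -> `|x - y| < 1.
Proof.
move=> x0 y0 xy; have /andP[x_lb x_ub] := truncn_itv x0.
have /andP[y_lb y_ub] := truncn_itv y0.
rewrite xy -natr1 in x_lb x_ub; rewrite -natr1 in y_ub.
by rewrite ltr_norml; apply/andP; split; lra.
Qed.

Lemma fracr_pigeonhole a m : exists i j : 'I_m.+2,
  i != j /\ `|fracr (a * i%:R) - fracr (a * j%:R)| < (m.+1%:R)^-1.
Proof.
pose N : R := m.+1%:R; have N0 : 0 < N by rewrite ltr0n.
pose box (k : 'I_m.+2) : 'I_m.+1 := inord (Num.truncn (N * fracr (a * k%:R))).
have box_lt k : (Num.truncn (N * fracr (a * k%:R)) < m.+1)%N.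
  rewrite truncn_lt_nat ?mulr_ge0 ?fracr_ge0 ?ler0n //.
  by rewrite -[X in _ < X]mulr1 ltr_pM2l ?fracr_lt1.
have /injectivePn[i [j ij box_ij]] : ~~ injectiveb box.
  by apply/injectiveP => /leq_card; rewrite !card_ord ltnn.
exists i, j; split => //.
have := congr1 val box_ij; rewrite /= !inordK // => /truncn_eq_dist_lt1.
rewrite -mulrBr normrM gtr0_norm // -ltr_pdivlMl // mulr1 => ->;
  by rewrite ?mulr_ge0 ?fracr_ge0.
Qed.

Lemma dirichlet_approx a m : exists x y : int,
  [/\ y != 0, `|y| <= m.+1 & `|a * y%:~R - x%:~R| < (m.+1%:R)^-1].
Proof.
have [i [j [ij close_ij]]] := fracr_pigeonhole a m.
exists (Num.floor (a * i%:R) - Num.floor (a * j%:R)), (i%:Z - j%:Z); split.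
- by rewrite subr_eq0 eqz_nat.
- by have := ltn_ord i; have := ltn_ord j; lia.
move: close_ij; rewrite intrB !pmulrn mulrBr !intrB /fracr.
by congr (`|_| < _); ring.
Qed.

End Dirichlet.

Section Diophantine.
Variable R : realType.
Implicit Types (a nu mu : R) (p q : int).

Lemma irrational_mulz_neq a p q :
  irrational a -> 0 < q -> a * q%:~R != p%:~R.
Proof.
move=> ira q0; apply/eqP => aqp; apply: ira; apply/rationalP; exists p, `|q|%N.
by rewrite -aqp natr_absz gtr0_norm ?ltr0z // mulfK // intr_eq0 gt_eqF.
Qed.

Lemma coprime_reduction a (x y : int) : y != 0 ->
  exists p q g : int, [/\ coprimez p q, 0 < q, 0 < g, `|y| = g * q &
     `|a * y%:~R - x%:~R| = g%:~R * `|a * q%:~R - p%:~R| ].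
Proof.
move=> y0; set g := gcdz x y.
have g0 : 0 < g by rewrite lt_def gcdz_eq0 (negbTE y0) andbF.
pose p := (x %/ g)%Z; pose q := (y %/ g)%Z.
have xE : p * g = x := divzK (dvdz_gcdl x y).
have yE : q * g = y := divzK (dvdz_gcdr x y).
have cop : coprimez p q.
  have gpq := mulz_gcdl p q g; rewrite xE yE gtz0_abs // in gpq.
  by apply/eqP/(mulIf (lt0r_neq0 g0)); rewrite mul1r.
have linE : a * y%:~R - x%:~R = g%:~R * (a * q%:~R - p%:~R).
  by rewrite -xE -yE !intrM; ring.
have yabs : `|y| = g * `|q| by rewrite -yE normrM mulrC gtr0_norm.
have g0R : 0 <= g%:~R :> R by rewrite ler0z ltW.
have [q0|q0|q0] := ltrgt0P q; last by rewrite -yE q0 mul0r eqxx in y0.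
- exists p, q, g; split => //; first by rewrite yabs gtr0_norm.
  by rewrite linE normrM ger0_norm.
- exists (-p), (-q), g; split => //; first by rewrite coprimeNz coprimezN.
  + by rewrite oppr_gt0.
  + by rewrite yabs ltr0_norm.
  by rewrite linE normrM ger0_norm // !intrN -normrN; congr (_ * `|_|); ring.
Qed.

Definition good_approximations a nu : set (int * int) :=
  [set pq : int * int | [/\ coprimez pq.1 pq.2, (0 < pq.2)%R &
     `|a - pq.1%:~R / pq.2%:~R| < (pq.2%:~R : R) `^ (- nu)]].

Lemma good_approximations_error_lb a nu : irrational a ->
  finite_set (good_approximations a nu) -> exists2 d : R, 0 < d &
    forall pq, good_approximations a nu pq -> d <= `|a * pq.2%:~R - pq.1%:~R|.
Proof.
move=> ira finA; apply: (finite_set_lb_gt0 finA) => pq [_ q0 _].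
by rewrite normr_gt0 subr_eq0 irrational_mulz_neq.
Qed.

Lemma approx_error_lb a nu p q : 0 < q ->
  (q%:~R : R) `^ (- nu) <= `|a - p%:~R / q%:~R| ->
  1 <= `|a * q%:~R - p%:~R| * (q%:~R : R) `^ (nu - 1).
Proof.
move=> q0; set Q : R := q%:~R; have Q0 : 0 < Q by rewrite ltr0z.
have -> : a - p%:~R / Q = (a * Q - p%:~R) / Q by rewrite mulrBl mulfK ?gt_eqF.
have -> : Q `^ (- nu) = Q^-1 * (Q `^ (nu - 1))^-1.
  by rewrite powRN powRB ?(gt_eqF Q0) ?implybT // powRr1 ?ltW // invf_div mulKf ?gt_eqF.
rewrite normrM normfV (gtr0_norm Q0) [X in _ <= X]mulrC ler_pM2l ?invr_gt0 //.
by rewrite -div1r ler_pdivrMr ?powR_gt0.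
Qed.

Lemma good_exponent2 a : irrational a -> good_exponent a 2.
Proof.
move=> ira; split => [|finA]; first by rewrite ler1n.
have [d d0 le_d] := good_approximations_error_lb ira finA.
pose M : R := (Num.truncn d^-1).+1%:R.
have M0 : 0 < M by rewrite ltr0n.
have Md : M^-1 < d by rewrite -[d]invrK ltf_pV2 ?posrE ?invr_gt0 ?truncnS_gt.
have [x [y [y0 yM err_y]]] := dirichlet_approx a (Num.truncn d^-1).
have [p [q [g [cop q0 g0 yE errE]]]] := coprime_reduction a x y0.
set Q : R := q%:~R; set G : R := g%:~R; set e := `|a * Q - p%:~R|.
have Q0 : 0 < Q by rewrite ltr0z.
have G1 : 1 <= G by rewrite ler1z.
have e0 : 0 <= e := normr_ge0 _.
have GQM : G * Q <= M by rewrite -intrM -yE -[M]/((_ : nat)%:~R) ler_int.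
have GeM : G * e < M^-1 by rewrite -errE.
have eQ1 : e * Q < 1.
  rewrite -(mulVf (lt0r_neq0 M0)); apply: (@le_lt_trans _ _ ((G * e) * (G * Q))).
    by rewrite mulrACA ler_peMl ?mulr_ege1 ?(mulr_ge0 e0 (ltW Q0)).
  apply: (@le_lt_trans _ _ (G * e * M)); last by rewrite ltr_pM2r.
  by apply: ler_wpM2l; rewrite ?mulr_ge0 ?(le_trans ler01 G1).
have inA : good_approximations a 2 (p, q).
  split => //=; rewrite ltNge; apply/negP => /(approx_error_lb q0).
  by rewrite -/Q -/e (_ : 2 - 1 = 1) ?powRr1 ?(ltW Q0) // ?leNgt ?eQ1 //; lra.
have := le_d _ inA; rewrite /= -/Q -/e => de.
by have := lt_trans (le_lt_trans (ler_peMl e0 G1) GeM) Md; rewrite ltNge de.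
Qed.

Lemma irr_measure_ge2 a mu : irrational a -> irr_measure a = mu%:E -> 2 <= mu.
Proof.
move=> ira amu; rewrite -lee_fin -amu.
by apply: ereal_sup_ubound; exists 2 => //; apply: good_exponent2.
Qed.

Lemma finite_good_approximations a mu nu : irr_measure a = mu%:E ->
  1 <= nu -> mu < nu -> finite_set (good_approximations a nu).
Proof.
move=> amu nu1 mu_nu; apply: contrapT => infin.
have : (nu%:E <= irr_measure a)%E by apply: ereal_sup_ubound; exists nu.
by rewrite amu lee_fin leNgt mu_nu.
Qed.

Lemma diophantine_lb a nu :
  irrational a -> 1 <= nu -> finite_set (good_approximations a nu) ->
  exists2 c : R, 0 < c & forall (n1 n2 : int) (J : R), (n1, n2) != (0, 0) ->
    1 <= J -> `|n1%:~R| <= J -> c <= `|a * n1%:~R + n2%:~R| * J `^ (nu - 1).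
Proof.
move=> ira nu1 finA.
have [d d0 le_d] := good_approximations_error_lb ira finA.
exists (Num.min 1 d) => [|n1 n2 J n0 J1 n1J]; first by rewrite lt_min ltr01 d0.
have pow_ge1 t : 1 <= t -> 1 <= t `^ (nu - 1).
  by move=> t1; rewrite -[X in X <= _](powRr0 t); apply: ler_powR; rewrite ?subr_ge0.
have [n1_0|n1_neq0] := eqVneq n1 0.
  move: n0; rewrite n1_0 mulr0 add0r xpair_eqE eqxx /= => n2_neq0.
  have n2_ge1 : 1 <= `|n2%:~R : R| by rewrite -intr_norm ler1z -gtz0_ge1 normr_gt0.
  by rewrite ge_min (le_trans _ (ler_pM ler01 ler01 n2_ge1 (pow_ge1 _ J1))) ?mulr1.
have [p [q [g [cop q0 g0 n1E errE]]]] := coprime_reduction a (- n2) n1_neq0.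
rewrite intrN opprK in errE; rewrite {}errE.
set Q : R := q%:~R; set e := `|a * Q - p%:~R|.
have Q1 : 1 <= Q by rewrite ler1z.
have g1 : 1 <= g%:~R :> R by rewrite ler1z.
have e0 : 0 <= e := normr_ge0 _.
have le_min_e : Num.min 1 d <= e * Q `^ (nu - 1).
  have [inA|notinA] := boolP (`|a - p%:~R / Q| < Q `^ (- nu)).
    rewrite ge_min (le_trans (le_d (p, q) (And3 cop q0 inA))) ?orbT //=.
    by rewrite ler_peMr ?pow_ge1.
  by rewrite ge_min approx_error_lb // leNgt.
apply: (le_trans le_min_e); apply: ler_pM; rewrite ?powR_ge0 ?ler_peMl //.
apply: ge0_ler_powR; rewrite ?nnegrE ?subr_ge0 ?(le_trans ler01) //.
apply: le_trans n1J; rewrite -intr_norm n1E intrM ler_peMl //.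
exact: le_trans ler01 Q1.
Qed.

End Diophantine.

Section Weights.
Variable R : realType.
Implicit Types (s sigma nu a b c x J : R) (n : int * int).

Lemma jbr_le1D x : jbr x <= 1 + `|x|.
Proof.
rewrite /jbr -[X in _ <= X]ger0_norm ?addr_ge0 // -sqrtr_sqr.
rewrite ler_sqrt ?sqr_ge0 // -real_normK ?num_real //.
by have := normr_ge0 x; nra.
Qed.

Lemma jbrZ2_ge1 n : 1 <= jbrZ2 R n.
Proof.
by rewrite -sqrtr1 ler_sqrt ?addr_ge0 ?sqr_ge0 // -addrA lerDl addr_ge0 ?sqr_ge0.
Qed.

Lemma jbrZ2_ge_norm1 n : `|n.1%:~R| <= jbrZ2 R n.
Proof.
rewrite -sqrtr_sqr ler_sqrt ?addr_ge0 ?sqr_ge0 // -real_normK ?num_real //.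
by rewrite addrAC lerDr addr_ge0 ?sqr_ge0.
Qed.

Lemma jbrZ2_ge_norm2 n : `|n.2%:~R| <= jbrZ2 R n.
Proof.
rewrite -sqrtr_sqr ler_sqrt ?addr_ge0 ?sqr_ge0 // -real_normK ?num_real //.
by rewrite lerDr addr_ge0 ?sqr_ge0.
Qed.

Lemma jbr_dotw_le w1 w2 n :
  jbr (dotw w1 w2 n) <= (1 + `|w1| + `|w2|) * jbrZ2 R n.
Proof.
apply: le_trans (jbr_le1D _) _; rewrite !mulrDl mul1r -addrA lerD ?jbrZ2_ge1 //.
apply: le_trans (ler_normD _ _) _; rewrite !normrM.
by rewrite lerD ?ler_wpM2l ?jbrZ2_ge_norm1 ?jbrZ2_ge_norm2.
Qed.

Lemma ge1_powRD_le J a b c : 1 <= J -> a + b <= c -> J `^ a * J `^ b <= J `^ c.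
Proof.
move=> J1 abc; rewrite -powRD ?ler_powR //.
by rewrite (gt_eqF (lt_le_trans ltr01 J1)) implybT.
Qed.

Lemma Y_weight1_le w1 w2 s sigma n : sigma + 1 <= s ->
  jbrZ2 R n `^ sigma * jbr (dotw w1 w2 n) <= (1 + `|w1| + `|w2|) * jbrZ2 R n `^ s.
Proof.
move=> sigma_s; have J1 := jbrZ2_ge1 n.
apply: le_trans (ler_wpM2l (powR_ge0 _ _) (jbr_dotw_le _ _ _)) _.
rewrite mulrCA ler_wpM2l ?addr_ge0 //.
by rewrite -[X in _ * X <= _](powRr1 (le_trans ler01 J1)) ge1_powRD_le.
Qed.

Lemma Y_weight2_le w1 w2 s sigma nu c n : 0 < c -> sigma + (nu - 1) <= s ->
  c <= `|dotw w1 w2 n| * jbrZ2 R n `^ (nu - 1) ->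
  jbrZ2 R n `^ sigma / (2 * pi * `|dotw w1 w2 n|) <= (2 * pi * c)^-1 * jbrZ2 R n `^ s.
Proof.
move=> c0 sigma_s c_le; have J1 := jbrZ2_ge1 n.
set J := jbrZ2 R n; set D := `|dotw w1 w2 n|; set P := J `^ (nu - 1).
have P0 : 0 < P by rewrite powR_gt0 // (lt_le_trans ltr01 J1).
have D0 : 0 < D by rewrite -(pmulr_lgt0 _ P0) (lt_le_trans c0 c_le).
have pi0 : 0 < 2 * pi :> R by rewrite mulr_gt0 ?pi_gt0.
set tpi := 2 * pi in pi0 *.
have -> : J `^ sigma / (tpi * D) = (tpi * (D * P))^-1 * (J `^ sigma * P).
  by field; rewrite !gt_eqF.
have DP0 : 0 < D * P := mulr_gt0 D0 P0.
apply: ler_pM; last exact: ge1_powRD_le.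
- by rewrite invr_ge0 (ltW (mulr_gt0 pi0 DP0)).
- by rewrite mulr_ge0 ?powR_ge0.
- by rewrite lef_pV2 ?posrE ?(mulr_gt0 pi0) // (ler_pM2l pi0); exact: c_le.
Qed.

End Weights.

Lemma normc_ge0 (R : rcfType) (z : R[i]) : 0 <= Normc.normc z.
Proof. by case: z => x y; apply: sqrtr_ge0. Qed.

Section WeightedL2.
Variables (R : realType) (T : choiceType) (I : set T).

Lemma esumZl_le (a : T -> \bar R) (k : R) : 0 <= k -> (forall i, (0 <= a i)%E) ->
  (\esum_(i in I) (k%:E * a i) <= k%:E * \esum_(i in I) a i)%E.
Proof.
move=> k0 a0; apply: ge_ereal_sup => _ [X [finX XI] <-].
rewrite fsbig_finite // -ge0_sume_distrr // -fsbig_finite //.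
by apply: lee_wpmul2l; [rewrite lee_fin | apply: ereal_sup_ubound; exists X].
Qed.

Lemma sqrte_esum_sqr_le (t h : T -> R) (k : R) :
  0 <= k -> (forall i, 0 <= t i) -> (forall i, t i <= k * h i) ->
  (sqrte (\esum_(i in I) (t i ^+ 2)%:E)
     <= k%:E * sqrte (\esum_(i in I) (h i ^+ 2)%:E))%E.
Proof.
move=> k0 t0 t_le; have sqr0 (x : R) : (0 <= (x ^+ 2)%:E)%E by rewrite lee_fin sqr_ge0.
have -> : k%:E = sqrte ((k ^+ 2)%:E) by rewrite /= sqrtr_sqr ger0_norm.
rewrite -sqrteM ?esum_ge0 // lee_sqrt ?mule_ge0 ?esum_ge0 //.
apply: le_trans _ (esumZl_le (sqr_ge0 k) (fun i => sqr0 (h i))).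
apply: le_esum => i _; rewrite -EFinM lee_fin -exprMn.
by rewrite ler_pXn2r ?nnegrE ?(le_trans (t0 i) (t_le i)).
Qed.

End WeightedL2.

Unset Implicit Arguments.
Theorem lemma7p1 (R : realType) (w1 w2 : R) (s sigma mu : R) :
  w2 != 0 ->
  irrational (w1 / w2) ->
  irr_measure (w1 / w2) = mu%:E ->
  0 <= sigma -> sigma < s - mu + 1 ->
  embeds w1 w2 s sigma.
Proof.
move=> w2_neq0 ira amu _ sigma_s.
pose nu := (mu + (s + 1 - sigma)) / 2.
have mu_nu : mu < nu by rewrite /nu; lra.
have nu_s : sigma + (nu - 1) <= s by rewrite /nu; lra.
have mu2 := irr_measure_ge2 ira amu.
have nu1 : 1 <= nu by lra.
have [c c0 c_le] := diophantine_lb ira nu1 (finite_good_approximations amu nu1 mu_nu).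
have w2c0 : 0 < `|w2| * c by rewrite mulr_gt0 ?normr_gt0.
pose A := 1 + `|w1| + `|w2|; pose B := (2 * pi * (`|w2| * c))^-1.
have A0 : 0 <= A by rewrite !addr_ge0.
have B0 : 0 <= B by rewrite invr_ge0; apply/ltW; rewrite mulr_gt0 // mulr_gt0 ?pi_gt0.
exists (A + B); split => [|u]; first by rewrite ltr_wpDr // ltr_pwDl.
rewrite /Y_norm /Hs_norm EFinD ge0_muleDl ?lee_fin //; apply: leeD.
  apply: sqrte_esum_sqr_le A0 _ _ => n.
    by rewrite !mulr_ge0 ?powR_ge0 ?normc_ge0 ?sqrtr_ge0.
  by rewrite mulrA; apply: (ler_wpM2r (normc_ge0 _)); apply: Y_weight1_le; lra.
apply: sqrte_esum_sqr_le (B0) _ _ => -[n1 n2]; case: ifPn => n0.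
- by [].
- by rewrite !mulr_ge0 ?invr_ge0 ?powR_ge0 ?normc_ge0 ?mulr_ge0 ?pi_ge0.
- by apply: mulr_ge0 B0 _; rewrite mulr_ge0 ?powR_ge0 ?normc_ge0.
rewrite mulrA; apply: (ler_wpM2r (normc_ge0 _)); apply: (Y_weight2_le w2c0 nu_s).
have -> : dotw w1 w2 (n1, n2) = w2 * (w1 / w2 * n1%:~R + n2%:~R).
  by rewrite /dotw /=; field.
rewrite normrM -[X in _ <= X]mulrA; apply: (ler_wpM2l (normr_ge0 _)).
exact: c_le n1 n2 _ n0 (jbrZ2_ge1 _ _) (jbrZ2_ge_norm1 _ (n1, n2)).
Qed.
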